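(* The regular tensor product $\mathfrak{S}_A\widehat{\otimes}\mathfrak{S}_B$ is a sub Inf semi-lattice of the maximal tensor product $\check{S}_{AB}$, and $\mathfrak{S}_A\widetilde{\otimes}\mathfrak{S}_B\subseteq\mathfrak{S}_A\widehat{\otimes}\mathfrak{S}_B$.
   Context: $\mathfrak{B}=\{\mathbf{Y},\mathbf{N},\bot\}$ with $\bot$ below the incomparable $\mathbf{Y},\mathbf{N}$, meet $\wedge$, involution $\overline{\cdot}$ and product $\bullet$ ($x\bullet\mathbf{Y}=x$, $x\bullet\mathbf{N}=\mathbf{N}$, $\bot\bullet\bot=\bot$). $(\mathfrak{S}_A,\mathfrak{E}_A,\epsilon^{\mathfrak{S}_A})$, $(\mathfrak{S}_B,\mathfrak{E}_B,\epsilon^{\mathfrak{S}_B})$ are States/Effects Chu spaces (effects with negation $\overline{\mathfrak{l}}$, constant-$\mathbf{Y}$ effect $\mathfrak{Y}_{\mathfrak{E}}$, bottom effect $\bot_{\mathfrak{E}}$). $\check{S}_{AB}$ is the set of maps $\Phi:\mathfrak{E}_A\times\mathfrak{E}_B\to\mathfrak{B}$ preserving arbitrary infima in each variable with $\Phi(\overline{\mathfrak{l}_A},\mathfrak{Y}_{\mathfrak{E}_B})=\overline{\Phi(\mathfrak{l}_A,\mathfrak{Y}_{\mathfrak{E}_B})}$, $\Phi(\mathfrak{Y}_{\mathfrak{E}_A},\overline{\mathfrak{l}_B})=\overline{\Phi(\mathfrak{Y}_{\mathfrak{E}_A},\mathfrak{l}_B)}$, $\Phi(\mathfrak{Y}_{\mathfrak{E}_A},\mathfrak{Y}_{\mathfrak{E}_B})=\mathbf{Y}$,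 ordered pointwise. $\mathfrak{S}_A\widetilde{\otimes}\mathfrak{S}_B$ is its subset of maps $(\mathfrak{l}_A,\mathfrak{l}_B)\mapsto\bigwedge_{i}\epsilon_{\mathfrak{l}_A}(\sigma_{i,A})\bullet\epsilon_{\mathfrak{l}_B}(\sigma_{i,B})$. $\mathfrak{S}_A\widehat{\otimes}\mathfrak{S}_B$ is the set of $\Phi\in\check{S}_{AB}$ such that: $\Phi(\mathfrak{l}_A,\overline{\mathfrak{Y}_{\mathfrak{E}_B}})=\Phi(\overline{\mathfrak{Y}_{\mathfrak{E}_A}},\mathfrak{l}_B)=\mathbf{N}$ for all $\mathfrak{l}_A,\mathfrak{l}_B$; if $\Phi(\mathfrak{l}_A,\mathfrak{Y}_{\mathfrak{E}_B})=\mathbf{Y}$ then $(\Phi(\mathfrak{l}_A,\mathfrak{l}_B),\Phi(\mathfrak{l}_A,\overline{\mathfrak{l}_B}))\in\{(\mathbf{Y},\mathbf{N}),(\mathbf{N},\mathbf{Y}),(\bot,\bot)\}$ for all $\mathfrak{l}_B$, and symmetrically in $A$; if $\Phi(\mathfrak{l}_A,\mathfrak{Y}_{\mathfrak{E}_B})=\bot$ then for all $\mathfrak{l}_B,\mathfrak{l}'_B$ with $\mathfrak{l}_B\sqcap\mathfrak{l}'_B=\bot_{\mathfrak{E}_B}$, $(\Phi(\mathfrak{l}_A,\mathfrak{l}_B),\Phi(\mathfrak{l}_A,\mathfrak{l}'_B))\in\{(\bot,\mathbf{N}),(\mathbf{N},\bot),(\bot,\bot)\}$, and symmetrically in $A$.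 *)

From Stdlib Require Import Classical ClassicalEpsilon.

Inductive Bool3 : Type := BY | BN | BBot.

Definition ble (x y : Bool3) : Prop := x = BBot \/ x = y.

Definition bmeet (x y : Bool3) : Bool3 :=
  match x, y with
  | BY, BY => BY
  | BN, BN => BN
  | _, _ => BBot
  end.

Definition bneg (x : Bool3) : Bool3 :=
  match x with BY => BN | BN => BY | BBot => BBot end.

Definition bprod (x y : Bool3) : Bool3 :=
  match x, y with
  | _, BN => BN
  | BN, _ => BN
  | BY, BY => BY
  | _, _ => BBot
  end.

(* Infimum of an arbitrary family in B (meaningful for nonempty families). *)
Definition Binf {I : Type} (f : I -> Bool3) : Bool3 :=
  if excluded_middle_informative (forall i, f i = BY) then BY
  else if excluded_middle_informative (forall i, f i = BN) then BN
  else BBot.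

(* States/Effects Chu space: states, effects, evaluation eps l s = eps_l(s),
   effect negation, the constant-Y effect and the bottom effect. *)
Record SEChu : Type := mkSEChu {
  state : Type;
  effect : Type;
  eps : effect -> state -> Bool3;
  eneg : effect -> effect;
  eY : effect;
  eBot : effect;
  eps_neg : forall l s, eps (eneg l) s = bneg (eps l s);
  eps_Y : forall s, eps eY s = BY;
  eps_Bot : forall s, eps eBot s = BBot
}.

Arguments eps {_} _ _.
Arguments eneg {_} _.
Arguments eY {_}.
Arguments eBot {_}.

Definition is_inf_eff {C : SEChu} {I : Type} (f : I -> effect C) (l : effect C) : Prop :=
  forall s, eps l s = Binf (fun i => eps (f i) s).

Definition meet_is_bot {C : SEChu} (l l' : effect C) : Prop :=
  forall s, bmeet (eps l s) (eps l' s) = BBot.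

Definition bimap (A B : SEChu) : Type := effect A -> effect B -> Bool3.

Definition ple {A B : SEChu} (P Q : bimap A B) : Prop :=
  forall la lb, ble (P la lb) (Q la lb).

Definition in_check {A B : SEChu} (Phi : bimap A B) : Prop :=
  (forall (I : Type) (f : I -> effect A) (l : effect A),
      inhabited I -> is_inf_eff f l ->
      forall lb, Phi l lb = Binf (fun i => Phi (f i) lb)) /\
  (forall (I : Type) (f : I -> effect B) (l : effect B),
      inhabited I -> is_inf_eff f l ->
      forall la, Phi la l = Binf (fun i => Phi la (f i))) /\
  (forall la, Phi (eneg la) eY = bneg (Phi la eY)) /\
  (forall lb, Phi eY (eneg lb) = bneg (Phi eY lb)) /\
  Phi eY eY = BY.

Definition comp_pair (x y : Bool3) : Prop :=
  (x = BY /\ y = BN) \/ (x = BN /\ y = BY) \/ (x = BBot /\ y = BBot).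

Definition bot_pair (x y : Bool3) : Prop :=
  (x = BBot /\ y = BN) \/ (x = BN /\ y = BBot) \/ (x = BBot /\ y = BBot).

Definition in_hat {A B : SEChu} (Phi : bimap A B) : Prop :=
  in_check Phi /\
  (forall la, Phi la (eneg eY) = BN) /\
  (forall lb, Phi (eneg eY) lb = BN) /\
  (forall la, Phi la eY = BY -> forall lb, comp_pair (Phi la lb) (Phi la (eneg lb))) /\
  (forall lb, Phi eY lb = BY -> forall la, comp_pair (Phi la lb) (Phi (eneg la) lb)) /\
  (forall la, Phi la eY = BBot ->
     forall lb lb', meet_is_bot lb lb' -> bot_pair (Phi la lb) (Phi la lb')) /\
  (forall lb, Phi eY lb = BBot ->
     forall la la', meet_is_bot la la' -> bot_pair (Phi la lb) (Phi la' lb)).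

Definition in_tilde {A B : SEChu} (Phi : bimap A B) : Prop :=
  exists (I : Type) (sA : I -> state A) (sB : I -> state B),
    inhabited I /\
    forall la lb, Phi la lb = Binf (fun i => bprod (eps la (sA i)) (eps lb (sB i))).

Definition inf_map {A B : SEChu} {J : Type} (Phi : J -> bimap A B) : bimap A B :=
  fun la lb => Binf (fun j => Phi j la lb).

(* Every condition defining Š_AB and S_A ⊗^ S_B constrains one argument of Φ,
   and exchanging the two arguments turns the conditions on the first argument
   into those on the second; so only the latter have to be checked.

   Infima in B commute with each other, with the involution and with the
   product by a fixed element.  This gives preservation of infima and of
   negation both for pointwise infima of maps and for the maps of the minimal
   tensor product.  For the regularity conditions the key fact is that, when
   l ⊓ l' = ⊥_E, the effect ⊥_E is the infimum both of {l, l'} and of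
   {Y, ¬Y}, so Φ(la, l) ∧ Φ(la, l') = Φ(la, Y) ∧ N.  Hence Φ(la, l) = Y forces
   Φ(la, Y) = Y, and Φ(la, l) = Φ(la, l') = N forces Φ(la, Y) = N; these two
   implications are what makes the regularity conditions stable under infima. *)

From Stdlib Require Import ClassicalEpsilon.

Lemma bprod_Yl x : bprod BY x = x.
Proof. now destruct x. Qed.

Lemma bprod_Nl x : bprod BN x = BN.
Proof. now destruct x. Qed.

Lemma bprod_Yr x : bprod x BY = x.
Proof. now destruct x. Qed.

Lemma bprod_Nr x : bprod x BN = BN.
Proof. now destruct x. Qed.

Lemma bprod_comm x y : bprod x y = bprod y x.
Proof. now destruct x, y. Qed.

Lemma bprod_eqY x y : bprod x y = BY -> x = BY.
Proof. now destruct x, y. Qed.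

Lemma comp_pair_bneg x : comp_pair x (bneg x).
Proof. unfold comp_pair; destruct x; simpl; auto. Qed.

Lemma comp_pair_eq_bneg x y : comp_pair x y -> y = bneg x.
Proof. now intros [[-> ->]|[[-> ->]|[-> ->]]]. Qed.

Lemma bot_pairI x y : x <> BY -> y <> BY -> ~ (x = BN /\ y = BN) -> bot_pair x y.
Proof. unfold bot_pair; destruct x, y; tauto. Qed.

Lemma bot_pair_neqY x y : bot_pair x y -> x <> BY.
Proof. now intros [[-> _]|[[-> _]|[-> _]]]. Qed.

Section Binf.

Context {I : Type}.
Implicit Types f g : I -> Bool3.

Lemma Binf_eqY f : Binf f = BY <-> forall i, f i = BY.
Proof.
  unfold Binf.
  destruct (excluded_middle_informative (forall i, f i = BY)); [tauto|].
  destruct (excluded_middle_informative _); split; intro; (discriminate || contradiction).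
Qed.

Lemma Binf_eqN f : inhabited I -> Binf f = BN <-> forall i, f i = BN.
Proof.
  intros [i0]; unfold Binf.
  destruct (excluded_middle_informative (forall i, f i = BY)) as [HY|].
  - split; [discriminate|intro HN]; specialize (HY i0); specialize (HN i0); congruence.
  - destruct (excluded_middle_informative _); split; intro; (discriminate || tauto).
Qed.

Lemma Binf_eqBot f : ~ (forall i, f i = BY) -> ~ (forall i, f i = BN) -> Binf f = BBot.
Proof.
  unfold Binf; intros nY nN.
  now repeat destruct excluded_middle_informative.
Qed.

Lemma eq_Binf_all {J : Type} f (g : J -> Bool3) :
  ((forall i, f i = BY) <-> (forall j, g j = BY)) ->
  ((forall i, f i = BN) <-> (forall j, g j = BN)) -> Binf f = Binf g.
Proof.
  unfold Binf; intros EY EN.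
  repeat destruct excluded_middle_informative; first [reflexivity | tauto].
Qed.

Lemma eq_Binf f g : (forall i, f i = g i) -> Binf f = Binf g.
Proof.
  intro E; apply eq_Binf_all; split; intros H i; specialize (H i); congruence.
Qed.

Lemma Binf_const c : inhabited I -> Binf (fun _ : I => c) = c.
Proof.
  intros HI; destruct c.
  - now apply Binf_eqY.
  - now apply Binf_eqN.
  - destruct HI as [i0]; apply Binf_eqBot; intro H; discriminate (H i0).
Qed.

Lemma Binf_bneg f : inhabited I -> Binf (fun i => bneg (f i)) = bneg (Binf f).
Proof.
  intro HI; destruct (Binf f) eqn:E; simpl.
  - rewrite Binf_eqY in E; apply Binf_eqN; auto; intro i; now rewrite E.
  - rewrite Binf_eqN in E by auto; apply Binf_eqY; intro i; now rewrite E.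
  - apply Binf_eqBot; intro H.
    + enough (Binf f = BN) by congruence.
      apply Binf_eqN; auto; intro i; specialize (H i); destruct (f i); easy.
    + enough (Binf f = BY) by congruence.
      apply Binf_eqY; intro i; specialize (H i); destruct (f i); easy.
Qed.

Lemma bprod_Binf_r x f : inhabited I -> bprod x (Binf f) = Binf (fun i => bprod x (f i)).
Proof.
  intro HI; destruct x.
  - rewrite bprod_Yl; apply eq_Binf; intro i; now rewrite bprod_Yl.
  - rewrite bprod_Nl, (eq_Binf _ (fun _ => BN)), Binf_const; auto.
    intro i; apply bprod_Nl.
  - destruct (Binf f) eqn:E; simpl; symmetry.
    + rewrite Binf_eqY in E; rewrite (eq_Binf _ (fun _ => BBot)), Binf_const; auto.
      intro i; now rewrite E.
    + rewrite Binf_eqN in E by auto; apply Binf_eqN; auto; intro i; now rewrite E.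
    + destruct HI as [i0]; apply Binf_eqBot.
      * intro H; specialize (H i0); now destruct (f i0).
      * intro H; enough (Binf f = BN) by congruence.
        apply Binf_eqN; [now exists|]; intro i; specialize (H i); now destruct (f i).
Qed.

Lemma Binf_le f i : ble (Binf f) (f i).
Proof.
  unfold ble; destruct (Binf f) eqn:E; auto; right.
  - now rewrite Binf_eqY in E.
  - rewrite Binf_eqN in E by now exists. now rewrite E.
Qed.

Lemma Binf_glb x f : inhabited I -> (forall i, ble x (f i)) -> ble x (Binf f).
Proof.
  unfold ble; intros HI H; destruct x; auto; right; symmetry.
  all: first [apply Binf_eqY | apply Binf_eqN; auto]; intro i.
  all: destruct (H i) as [E|E]; congruence.
Qed.

End Binf.

Lemma exchange_Binf {I J : Type} (F : I -> J -> Bool3) : inhabited I -> inhabited J ->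
  Binf (fun i => Binf (fun j => F i j)) = Binf (fun j => Binf (fun i => F i j)).
Proof.
  intros HI HJ; apply eq_Binf_all; split; intros H x.
  all: first [apply Binf_eqY | apply Binf_eqN; auto]; intro y; specialize (H y).
  all: first [rewrite Binf_eqY in H | rewrite Binf_eqN in H by auto]; apply H.
Qed.

Lemma Binf_bool (g : bool -> Bool3) : Binf g = bmeet (g true) (g false).
Proof.
  destruct (g true) eqn:E1, (g false) eqn:E2; simpl.
  all: first [ apply Binf_eqY; intros []; assumption
             | apply Binf_eqN; [exact (inhabits true) | intros []; assumption]
             | apply Binf_eqBot; intro H; pose proof (H true); pose proof (H false); congruence ].
Qed.

Lemma meet_is_bot_neg {C : SEChu} (l : effect C) : meet_is_bot l (eneg l).
Proof. intro s; rewrite eps_neg; now destruct (eps l s). Qed.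

Lemma is_inf_eff_bot {C : SEChu} (l l' : effect C) : meet_is_bot l l' ->
  is_inf_eff (fun b : bool => if b then l else l') eBot.
Proof. intros H s; rewrite eps_Bot, Binf_bool; symmetry; apply H. Qed.

Definition bimap_swap {A B : SEChu} (Phi : bimap A B) : bimap B A :=
  fun lb la => Phi la lb.

Record in_check_r {A B : SEChu} (Phi : bimap A B) : Prop := {
  check_r_inf : forall (I : Type) (f : I -> effect B) (l : effect B),
    inhabited I -> is_inf_eff f l ->
    forall la, Phi la l = Binf (fun i => Phi la (f i));
  check_r_neg : forall lb, Phi eY (eneg lb) = bneg (Phi eY lb)
}.

Record in_hat_r {A B : SEChu} (Phi : bimap A B) : Prop := {
  hat_r_check : in_check_r Phi;
  hat_r_negY : forall la, Phi la (eneg eY) = BN;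
  hat_r_Y : forall la, Phi la eY = BY ->
    forall lb, comp_pair (Phi la lb) (Phi la (eneg lb));
  hat_r_Bot : forall la, Phi la eY = BBot ->
    forall lb lb', meet_is_bot lb lb' -> bot_pair (Phi la lb) (Phi la lb')
}.

Lemma in_hat_iff {A B : SEChu} (Phi : bimap A B) :
  in_hat Phi <-> in_hat_r Phi /\ in_hat_r (bimap_swap Phi) /\ Phi eY eY = BY.
Proof.
  split.
  - intros [[infA [infB [negA [negB YY]]]] [NB [NA [YB [YA [BotB BotA]]]]]].
    now repeat split.
  - intros [[[infB negB] NB YB BotB] [[[infA negA] NA YA BotA] YY]].
    now repeat split.
Qed.

Lemma in_check_r_meet_bot {A B : SEChu} (Phi : bimap A B) : in_check_r Phi ->
  forall la lb lb', meet_is_bot lb lb' ->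
  Phi la eBot = bmeet (Phi la lb) (Phi la lb').
Proof.
  intros HPhi la lb lb' Hm.
  now rewrite (check_r_inf _ HPhi _ _ _ (inhabits true) (is_inf_eff_bot _ _ Hm)), Binf_bool.
Qed.

Lemma in_hat_r_meet_bot {A B : SEChu} (Phi : bimap A B) : in_hat_r Phi ->
  forall la lb lb', meet_is_bot lb lb' ->
  bmeet (Phi la lb) (Phi la lb') = bmeet (Phi la eY) BN.
Proof.
  intros HPhi la lb lb' Hm.
  pose proof (hat_r_check _ HPhi) as HC.
  rewrite <- (hat_r_negY _ HPhi la).
  now rewrite <- (in_check_r_meet_bot _ HC la _ _ Hm),
              <- (in_check_r_meet_bot _ HC la _ _ (meet_is_bot_neg eY)).
Qed.

Lemma in_hat_r_Y {A B : SEChu} (Phi : bimap A B) : in_hat_r Phi ->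
  forall la lb, Phi la lb = BY -> Phi la eY = BY.
Proof.
  intros HPhi la lb E.
  pose proof (in_hat_r_meet_bot _ HPhi la _ _ (meet_is_bot_neg lb)) as M.
  rewrite E in M.
  destruct (Phi la eY) eqn:EY; auto.
  - now destruct (Phi la (eneg lb)).
  - now destruct (bot_pair_neqY _ _ (hat_r_Bot _ HPhi la EY _ _ (meet_is_bot_neg lb))).
Qed.

Lemma in_hat_r_N {A B : SEChu} (Phi : bimap A B) : in_hat_r Phi ->
  forall la lb lb', meet_is_bot lb lb' ->
  Phi la lb = BN -> Phi la lb' = BN -> Phi la eY = BN.
Proof.
  intros HPhi la lb lb' Hm E E'.
  pose proof (in_hat_r_meet_bot _ HPhi la _ _ Hm) as M.
  rewrite E, E' in M; now destruct (Phi la eY).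
Qed.

Section InfMap.

Context {A B : SEChu} {J : Type} (Phi : J -> bimap A B) (HJ : inhabited J).

Lemma in_check_r_inf_map : (forall j, in_check_r (Phi j)) -> in_check_r (inf_map Phi).
Proof.
  intro HPhi; split; unfold inf_map.
  - intros I f l HI Hl la.
    rewrite <- exchange_Binf by assumption.
    apply eq_Binf; intro j; now apply (HPhi j).
  - intro lb; rewrite <- Binf_bneg by assumption.
    apply eq_Binf; intro j; apply (HPhi j).
Qed.

Lemma in_hat_r_inf_map : (forall j, in_hat_r (Phi j)) -> in_hat_r (inf_map Phi).
Proof.
  intro HPhi; split.
  - apply in_check_r_inf_map; intro j; apply (HPhi j).
  - intro la; apply Binf_eqN; auto; intro j; apply (HPhi j).
  - intros la HY lb; unfold inf_map in *; rewrite Binf_eqY in HY.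
    rewrite (eq_Binf (fun j => Phi j la (eneg lb)) (fun j => bneg (Phi j la lb))).
    + rewrite Binf_bneg by assumption; apply comp_pair_bneg.
    + intro j; apply comp_pair_eq_bneg, (HPhi j), HY.
  - intros la HBot lb lb' Hm; unfold inf_map in *.
    apply bot_pairI.
    + rewrite Binf_eqY; intro H.
      enough (Binf (fun j => Phi j la eY) = BY) by congruence.
      apply Binf_eqY; intro j; now apply (in_hat_r_Y _ (HPhi j) la lb).
    + rewrite Binf_eqY; intro H.
      enough (Binf (fun j => Phi j la eY) = BY) by congruence.
      apply Binf_eqY; intro j; now apply (in_hat_r_Y _ (HPhi j) la lb').
    + rewrite !Binf_eqN by assumption; intros [H H'].
      enough (Binf (fun j => Phi j la eY) = BN) by congruence.
      apply Binf_eqN; auto; intro j; now apply (in_hat_r_N _ (HPhi j) la lb lb').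
Qed.

End InfMap.

Lemma in_hat_inf_map {A B : SEChu} {J : Type} (Phi : J -> bimap A B) :
  inhabited J -> (forall j, in_hat (Phi j)) -> in_hat (inf_map Phi).
Proof.
  intros HJ HPhi; setoid_rewrite in_hat_iff in HPhi; apply in_hat_iff; split; [|split].
  - apply in_hat_r_inf_map; auto; intro j; now destruct (HPhi j).
  - apply (in_hat_r_inf_map (fun j => bimap_swap (Phi j))); auto; intro j; now destruct (HPhi j).
  - apply Binf_eqY; intro j; now destruct (HPhi j).
Qed.

Lemma in_tilde_swap {A B : SEChu} (Phi : bimap A B) : in_tilde Phi -> in_tilde (bimap_swap Phi).
Proof.
  intros (I & sA & sB & HI & HPhi); exists I, sB, sA; split; auto.
  intros lb la; unfold bimap_swap; rewrite HPhi; apply eq_Binf; intro i; apply bprod_comm.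
Qed.

Section Tilde.

Context {A B : SEChu} {I : Type} (sA : I -> state A) (sB : I -> state B) (HI : inhabited I).
Context (Phi : bimap A B)
  (HPhi : forall la lb, Phi la lb = Binf (fun i => bprod (eps la (sA i)) (eps lb (sB i)))).

Lemma tilde_eY la : Phi la eY = Binf (fun i => eps la (sA i)).
Proof. rewrite HPhi; apply eq_Binf; intro i; now rewrite eps_Y, bprod_Yr. Qed.

Lemma tilde_in_check_r : in_check_r Phi.
Proof.
  split.
  - intros K f l HK Hl la; rewrite HPhi.
    transitivity (Binf (fun i => Binf (fun k => bprod (eps la (sA i)) (eps (f k) (sB i))))).
    + apply eq_Binf; intro i; now rewrite Hl, bprod_Binf_r.
    + rewrite exchange_Binf by assumption; apply eq_Binf; intro k; now rewrite HPhi.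
  - intro lb; rewrite !HPhi, <- Binf_bneg by assumption.
    apply eq_Binf; intro i; now rewrite eps_neg, eps_Y, !bprod_Yl.
Qed.

Lemma tilde_in_hat_r : in_hat_r Phi.
Proof.
  split.
  - exact tilde_in_check_r.
  - intro la; rewrite HPhi, (eq_Binf _ (fun _ => BN)), Binf_const; auto.
    intro i; now rewrite eps_neg, eps_Y, bprod_Nr.
  - intros la HY lb; rewrite tilde_eY, Binf_eqY in HY.
    rewrite !HPhi.
    rewrite (eq_Binf (fun i => bprod _ (eps (eneg lb) _))
                     (fun i => bneg (bprod (eps la (sA i)) (eps lb (sB i))))).
    + rewrite Binf_bneg by assumption; apply comp_pair_bneg.
    + intro i; now rewrite HY, eps_neg, !bprod_Yl.
  - intros la HBot lb lb' Hm; rewrite tilde_eY in HBot.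
    apply bot_pairI; rewrite ?HPhi, ?Binf_eqY.
    1, 2: intro H; enough (Binf (fun i => eps la (sA i)) = BY) by congruence;
      apply Binf_eqY; intro i; exact (bprod_eqY _ _ (H i)).
    rewrite !Binf_eqN by assumption; intros [H H'].
    enough (Binf (fun i => eps la (sA i)) = BN) by congruence.
    apply Binf_eqN; auto; intro i.
    (* the factors from B cannot both be N, since their meet is ⊥ *)
    specialize (H i); specialize (H' i); specialize (Hm (sB i)).
    destruct (eps la (sA i)), (eps lb (sB i)), (eps lb' (sB i)); easy.
Qed.

End Tilde.

Lemma in_tilde_hat_r {A B : SEChu} (Phi : bimap A B) : in_tilde Phi -> in_hat_r Phi.
Proof. intros (I & sA & sB & HI & HPhi); exact (tilde_in_hat_r sA sB HI Phi HPhi). Qed.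

Lemma in_tilde_hat {A B : SEChu} (Phi : bimap A B) : in_tilde Phi -> in_hat Phi.
Proof.
  intro HPhi; apply in_hat_iff; split; [|split].
  - now apply in_tilde_hat_r.
  - now apply in_tilde_hat_r, in_tilde_swap.
  - destruct HPhi as (I & sA & sB & HI & E).
    rewrite (tilde_eY sA sB Phi E); apply Binf_eqY; intro i; apply eps_Y.
Qed.

Theorem mainTheorem17 (A B : SEChu) :
  (forall (J : Type) (Phi : J -> bimap A B),
     inhabited J -> (forall j, in_hat (Phi j)) ->
     in_hat (inf_map Phi) /\
     (forall j, ple (inf_map Phi) (Phi j)) /\
     (forall Psi : bimap A B, in_check Psi -> (forall j, ple Psi (Phi j)) ->
        ple Psi (inf_map Phi))) /\
  (forall Phi : bimap A B, in_tilde Phi -> in_hat Phi).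
Proof.
  split.
  - intros J Phi HJ HPhi; split; [|split].
    + now apply in_hat_inf_map.
    + intros j la lb; exact (Binf_le (fun j => Phi j la lb) j).
    + intros Psi _ HPsi la lb; apply Binf_glb; auto.
      intro j; apply HPsi.
  - exact in_tilde_hat.
Qed.
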